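(* Let $M$ be a strong $r$-helix hypersurface in $E^n$ with space of helix directions $H(M)\subset\mathbb{R}^n$. Let $\alpha: I\subset\mathbb{R}\to M$ be a unit speed (arc-length parametrized) curve on $M$ with Frenet frame $\{V_1(s),\dots,V_n(s)\}$. If $\alpha$ is a geodesic curve on $M$, then for every $d\in H(M)$, $d\in\mathrm{Sp}\{V_2'\}^\perp$ along $\alpha$, i.e. $\langle V_2'(s),d\rangle=0$ for all $s\in I$.
   Context: $\langle\cdot,\cdot\rangle$ is the standard inner product on $E^n=\mathbb{R}^n$. For a hypersurface $M\subset\mathbb{R}^n$ with unit normal $N$, a vector $d$ is a helix direction of $M$ if the angle between $d$ and $T_pM$ is the same for all $p\in M$, equivalently $\langle N,d\rangle$ is constant on $M$. $H(M)$ is the set of helix directions; $M$ is a strong $r$-helix if $H(M)$ is an $r$-dimensional linear subspace. The Frenet frame of a unit speed curve with nonvanishing curvatures $k_i$ is the orthonormal frame $\{V_1=\alpha',V_2,\dots,V_n\}$ with $V_1'=k_1V_2$, $V_i'=-k_{i-1}V_{i-1}+k_iV_{i+1}$ ($1<i<n$), $V_n'=-k_{n-1}V_{n-1}$. A curve on $M$ is a geodesic if $\alpha''$ is normal to $M$. $\mathrm{Sp}\{v\}^\perp$ is the orthogonal complement of the span of $v$. *)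

From HB Require Import structures.
From mathcomp Require Import all_boot all_order all_algebra.
From mathcomp Require Import all_classical all_reals all_analysis.
Set Implicit Arguments. Unset Strict Implicit. Unset Printing Implicit Defensive.
Import Order.TTheory GRing.Theory Num.Theory.
Import numFieldNormedType.Exports.
Local Open Scope classical_set_scope.
Local Open Scope ring_scope.

Section Defs.
Variables (R : realType) (n : nat).
Notation vec := 'rV[R]_n.

Definition dot (u v : vec) : R := \sum_(i < n) u ord0 i * v ord0 i.

Definition tangent_space (M : set vec) (p : vec) : set vec :=
  [set v | exists g : R -> vec,
     [/\ g 0 = p, (\forall t \near 0, M (g t)), derivable g 0 1
       & derive1 g 0 = v]].

Definition hypersurface_with_normal (M : set vec) (N : vec -> vec) : Prop :=
  {within M, continuous N} /\
  forall p, M p ->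
    dot (N p) (N p) = 1 /\ (forall v, tangent_space M p v <-> dot v (N p) = 0).

Definition helix_direction (M : set vec) (N : vec -> vec) (d : vec) : Prop :=
  exists c : R, forall p, M p -> dot (N p) d = c.

(* strong r-helix: H(M) is an r-dimensional linear subspace, i.e. the row
   space of a row-free r x n matrix *)
Definition strong_helix (M : set vec) (N : vec -> vec) (r : nat) : Prop :=
  exists B : 'M[R]_(r, n), row_free B /\
    forall d : vec, helix_direction M N d <-> (d <= B)%MS.

Definition unit_speed_curve_on (M : set vec) (I : set R) (alpha : R -> vec) :=
  forall s, I s -> [/\ M (alpha s), derivable alpha s 1
                     & dot (derive1 alpha s) (derive1 alpha s) = 1].

(* Frenet frame {V 1, ..., V n} (indices 1..n as in the paper) with
   nonvanishing curvatures k 1, ..., k (n-1) along alpha on I *)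
Definition frenet_frame (I : set R) (alpha : R -> vec)
    (V : nat -> R -> vec) (k : nat -> R -> R) : Prop :=
  forall s, I s ->
  [/\ (forall i j, (1 <= i <= n)%N -> (1 <= j <= n)%N ->
        dot (V i s) (V j s) = (i == j)%:R),
      V 1%N s = derive1 alpha s,
      (forall i, (1 <= i <= n)%N -> derivable (V i) s 1),
      (forall i, (1 <= i < n)%N -> k i s != 0)
    & [/\ derive1 (V 1%N) s = k 1%N s *: V 2%N s,
      (forall i, (1 < i < n)%N ->
        derive1 (V i) s = - (k i.-1 s *: V i.-1 s) + k i s *: V i.+1 s)
    & derive1 (V n) s = - (k n.-1 s *: V n.-1 s)]].

Definition geodesic_on (M : set vec) (I : set R) (alpha : R -> vec) : Prop :=
  forall s, I s ->
    [/\ derivable alpha s 1, derivable (derive1 alpha) s 1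
      & (forall v, tangent_space M (alpha s) v ->
          dot (derive1 (derive1 alpha) s) v = 0)].

End Defs.

From HB Require Import structures.
From mathcomp Require Import all_boot all_order all_algebra.
From mathcomp Require Import all_classical all_reals all_analysis.
Import Order.TTheory GRing.Theory Num.Theory.
Import numFieldNormedType.Exports.
Local Open Scope classical_set_scope.
Local Open Scope ring_scope.

(* Along a geodesic, alpha'' = V_1' = k_1 V_2 is normal to M and k_1 <> 0, so
   the unit vector V_2 is itself a unit normal: V_2 = +-N along alpha.  Hence
   <V_2, d> = +-<N, d> = +-c for a helix direction d, so the differentiable
   function <V_2, d> has constant square c^2, and its derivative <V_2', d>
   vanishes. *)

Section EuclideanDot.
Context {R : realType} {n : nat}.
Implicit Types u v w : 'rV[R]_n.

Lemma dotC u v : dot u v = dot v u.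
Proof. by apply: eq_bigr => i _; rewrite mulrC. Qed.

Lemma dotBl u v w : dot (u - v) w = dot u w - dot v w.
Proof. by rewrite /dot -sumrB; apply: eq_bigr => i _; rewrite !mxE mulrBl. Qed.

Lemma dotZl a u w : dot (a *: u) w = a * dot u w.
Proof. by rewrite /dot mulr_sumr; apply: eq_bigr => i _; rewrite !mxE mulrA. Qed.

Lemma dotZr a u w : dot u (a *: w) = a * dot u w.
Proof. by rewrite dotC dotZl dotC. Qed.

Lemma dot_eq0 u : dot u u = 0 -> u = 0.
Proof.
move=> /eqP; rewrite psumr_eq0 => [/allP uu0|i _]; last by rewrite -expr2 sqr_ge0.
apply/matrixP => i j; rewrite (ord1 i) mxE.
by have := uu0 j (mem_index_enum _); rewrite /= -expr2 sqrf_eq0 => /eqP.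
Qed.

Lemma orthogonal_to_hyperplane_parallel u nu : dot nu nu = 1 ->
  (forall w, dot w nu = 0 -> dot u w = 0) -> u = dot u nu *: nu.
Proof.
move=> nu1 u_perp; set w := u - dot u nu *: nu.
have w_nu : dot w nu = 0 by rewrite dotBl dotZl nu1 mulr1 subrr.
suff /dot_eq0/eqP : dot w w = 0 by rewrite subr_eq0 => /eqP.
by rewrite {1}/w dotBl dotZl (dotC nu) w_nu mulr0 subr0 u_perp.
Qed.

Definition dotr v u : R^o := dot u v.

Lemma dotr_linear v : linear (dotr v).
Proof.
move=> a u w; rewrite /dotr /dot scaler_sumr -big_split /=.
by apply: eq_bigr => i _; rewrite !mxE mulrDl -mulrA.
Qed.

HB.instance Definition _ v :=
  GRing.isLinear.Build _ _ _ _ (dotr v) (dotr_linear v).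

Lemma dotr_continuous v : continuous (dotr v).
Proof.
apply: (@continuous_big _ _ +%R 0 xpredT) => [[x y]|i _ x].
  exact: add_continuous.
by apply: continuousM; [exact: coord_continuous | exact: cst_continuous].
Qed.

Lemma differentiable_dotr v u : differentiable (dotr v) u.
Proof. exact/linear_differentiable/dotr_continuous. Qed.

Lemma derivable_dotr (f : R -> 'rV[R]_n) v x : derivable f x 1 ->
  derivable (dotr v \o f) x 1.
Proof.
move=> /derivable1_diffP df; apply/derivable1_diffP.
exact: differentiable_comp df (differentiable_dotr _ _).
Qed.

Lemma derive_dotr (f : R -> 'rV[R]_n) v x : derivable f x 1 ->
  'D_1 (dotr v \o f) x = dot ('D_1 f x) v.
Proof.
move=> /derivable1_diffP df.
rewrite deriveE; last exact: differentiable_comp df (differentiable_dotr _ _).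
rewrite diff_comp //; last exact: differentiable_dotr.
by rewrite (diff_lin _ (dotr_continuous v)) /= -deriveE.
Qed.

End EuclideanDot.

Lemma derive_eq0_of_sqr_locally_constant (R : realType) (f : R -> R^o) c s :
  derivable f s 1 -> (\forall t \near s, f t ^+ 2 = c ^+ 2) -> 'D_1 f s = 0.
Proof.
move=> df f2c; have [c0 | c0] := eqVneq c 0.
  rewrite {}c0 in f2c; rewrite (@near_eq_derive _ _ _ _ (cst 0)) ?derive_cst //.
  by apply: filterS f2c => t; rewrite expr0n /= => /eqP; rewrite sqrf_eq0 => /eqP.
have fs0 : f s != 0.
  by apply: contra c0 => /eqP fs0; rewrite -sqrf_eq0 -(nbhs_singleton f2c) fs0 expr0n.
have : 'D_1 (f * f) s = 0.
  by rewrite (@near_eq_derive _ _ _ _ (cst (c ^+ 2))) ?derive_cst.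
rewrite deriveM // -mulr2n => /eqP; rewrite mulrn_eq0 scaler_eq0 (negbTE fs0).
by move=> /eqP.
Qed.

Section GeodesicFrenet.
Context {R : realType} {n : nat} {M : set 'rV[R]_n} {N : 'rV[R]_n -> 'rV[R]_n}.
Context {I : set R} {alpha : R -> 'rV[R]_n}.
Context {V : nat -> R -> 'rV[R]_n} {k : nat -> R -> R}.
Hypotheses (n_ge2 : (2 <= n)%N) (M_normal : hypersurface_with_normal M N).
Hypotheses (I_open : open I) (alpha_unit : unit_speed_curve_on M I alpha).
Hypotheses (frenet : frenet_frame I alpha V k) (geodesic : geodesic_on M I alpha).

(* alpha' and V_1 agree on the open set I, hence so do their derivatives. *)
Lemma geodesic_derive1_V1_normal t v : I t ->
  tangent_space M (alpha t) v -> dot (derive1 (V 1%N) t) v = 0.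
Proof.
move=> It v_tan; have [_ _ alpha''_normal] := geodesic t It.
suff -> : derive1 (V 1%N) t = derive1 (derive1 alpha) t by exact: alpha''_normal.
rewrite !derive1E; apply: near_eq_derive.
apply: filterS (open_nbhs_nbhs (conj I_open It)) => u Iu.
by have [_ -> _ _ _] := frenet u Iu.
Qed.

Lemma geodesic_V2_unit_normal t : I t ->
  exists2 sg : R, sg ^+ 2 = 1 & V 2%N t = sg *: N (alpha t).
Proof.
move=> It; have [M_alpha _ _] := alpha_unit t It.
have [N_unit tangentP] := M_normal.2 _ M_alpha.
have [orthonormal _ _ k_neq0 [dV1 _ _]] := frenet t It.
have V2_perp w : dot w (N (alpha t)) = 0 -> dot (V 2%N t) w = 0.
  move=> /tangentP /(geodesic_derive1_V1_normal _ _ It).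
  by rewrite dV1 dotZl => /eqP; rewrite mulf_eq0 (negbTE (k_neq0 1%N _)) => // /eqP.
have V2E := orthogonal_to_hyperplane_parallel _ _ N_unit V2_perp.
exists (dot (V 2%N t) (N (alpha t))) => //.
have := orthonormal 2%N 2%N; rewrite /= n_ge2 => /(_ isT isT).
by rewrite {1 2}V2E dotZl dotZr N_unit mulr1 -expr2.
Qed.

Lemma helix_dot_V2_sqr d c : (forall p, M p -> dot (N p) d = c) ->
  forall t, I t -> dot (V 2%N t) d ^+ 2 = c ^+ 2.
Proof.
move=> Nd_c t It; have [sg sg2 ->] := geodesic_V2_unit_normal _ It.
have [M_alpha _ _] := alpha_unit t It.
by rewrite dotZl Nd_c // exprMn sg2 mul1r.
Qed.

End GeodesicFrenet.

Theorem theorem3p5 (R : realType) (n r : nat) (M : set 'rV[R]_n)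
    (N : 'rV[R]_n -> 'rV[R]_n) (I : set R) (alpha : R -> 'rV[R]_n)
    (V : nat -> R -> 'rV[R]_n) (k : nat -> R -> R) :
  (2 <= n)%N ->
  hypersurface_with_normal M N ->
  strong_helix M N r ->
  open I -> is_interval I ->
  unit_speed_curve_on M I alpha ->
  frenet_frame I alpha V k ->
  geodesic_on M I alpha ->
  forall d : 'rV[R]_n, helix_direction M N d ->
  forall s, I s -> dot (derive1 (V 2%N) s) d = 0.
Proof.
move=> n_ge2 M_normal _ I_open _ alpha_unit frenet geodesic d [c Nd_c] s Is.
have dV2 : derivable (V 2%N) s 1.
  by have [_ _ dV _ _] := frenet s Is; apply: dV; rewrite /= n_ge2.
rewrite derive1E -derive_dotr //.
apply: (@derive_eq0_of_sqr_locally_constant _ (dotr d \o V 2%N) c).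
  exact: derivable_dotr.
apply: filterS (open_nbhs_nbhs (conj I_open Is)).
exact: (helix_dot_V2_sqr n_ge2 M_normal I_open alpha_unit frenet geodesic _ _ Nd_c).
Qed.
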